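(* Let $P$ be a poset and $\mathcal{U}$ a join-specification for $P$. Then there is a largest join-specification $\mathcal{U}'\subseteq\mathcal{U}$ that is frame-generating.
   Context: A join-specification for $P$ is a set $\mathcal{U}\subseteq\wp(P)$ such that $\bigvee S$ exists in $P$ for every $S\in\mathcal{U}$ and $\{p\}\in\mathcal{U}$ for every $p\in P$. A $\mathcal{U}$-ideal is a down-closed $C\subseteq P$ with $\bigvee S\in C$ whenever $S\in\mathcal{U}$, $S\subseteq C$; $\mathcal{I}_{\mathcal{U}}$ is the complete lattice of $\mathcal{U}$-ideals ordered by inclusion; $\mathcal{U}$ is frame-generating if $\mathcal{I}_{\mathcal{U}}$ is a frame. *)

From mathcomp Require Import all_boot all_order.
Set Implicit Arguments. Unset Strict Implicit. Unset Printing Implicit Defensive.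
Import Order.Theory.
Local Open Scope order_scope.

Definition is_join {d : Order.disp_t} {T : porderType d} (S : T -> Prop) (x : T) : Prop :=
  (forall s, S s -> s <= x) /\ (forall y, (forall s, S s -> s <= y) -> x <= y).

Definition join_spec {d : Order.disp_t} {T : porderType d} (U : (T -> Prop) -> Prop) : Prop :=
  (forall S, U S -> exists x, is_join S x) /\
  (forall p : T, U (fun q => q = p)).

Definition U_ideal {d : Order.disp_t} {T : porderType d} (U : (T -> Prop) -> Prop)
    (C : T -> Prop) : Prop :=
  (forall x y : T, x <= y -> C y -> C x) /\
  (forall S, U S -> (forall s, S s -> C s) -> forall x, is_join S x -> C x).

Definition subset {T : Type} (A B : T -> Prop) : Prop := forall x, A x -> B x.

Definition is_lub_in {T : Type} (L : (T -> Prop) -> Prop) (F : (T -> Prop) -> Prop)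
    (j : T -> Prop) : Prop :=
  L j /\ (forall A, F A -> subset A j) /\
  (forall B, L B -> (forall A, F A -> subset A B) -> subset j B).

Definition is_glb_in {T : Type} (L : (T -> Prop) -> Prop) (F : (T -> Prop) -> Prop)
    (m : T -> Prop) : Prop :=
  L m /\ (forall A, F A -> subset m A) /\
  (forall B, L B -> (forall A, F A -> subset B A) -> subset B m).

Definition complete_lattice_in {T : Type} (L : (T -> Prop) -> Prop) : Prop :=
  forall F, (forall A, F A -> L A) -> exists j, is_lub_in L F j.

(* binary meet a /\ b as a family *)
Definition pair_fam {T : Type} (a b : T -> Prop) : (T -> Prop) -> Prop :=
  fun A => A = a \/ A = b.

(* L (ordered by inclusion) is a frame: a complete lattice in which
   a /\ (\/ F) = \/ { a /\ s | s in F } for every a in L and every F included in L. *)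
Definition is_frame {T : Type} (L : (T -> Prop) -> Prop) : Prop :=
  complete_lattice_in L /\
  forall (a : T -> Prop) (F : (T -> Prop) -> Prop), L a -> (forall A, F A -> L A) ->
  forall j m k,
    is_lub_in L F j ->
    is_glb_in L (pair_fam a j) m ->
    is_lub_in L (fun c => exists s, F s /\ is_glb_in L (pair_fam a s) c) k ->
    m = k.

Definition frame_generating {d : Order.disp_t} {T : porderType d}
    (U : (T -> Prop) -> Prop) : Prop :=
  is_frame (U_ideal U).

From Pilot Require Import Defs.
From mathcomp Require Import all_boot all_order.
From Stdlib Require Import FunctionalExtensionality PropExtensionality.
Set Implicit Arguments. Unset Strict Implicit. Unset Printing Implicit Defensive.
Import Order.Theory.
Local Open Scope order_scope.

(* V is frame-generating iff every S in V is join-distributive: an element y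
   below the join of S lies in the V-ideal generated by the elements below
   both y and some s in S, i.e. the frame law for the principal ideal of y
   against the principal ideals of S.  A V-ideal for a larger V is also one for
   a smaller V, so join-distributivity is inherited by larger specifications;
   hence the union of all frame-generating join-specifications inside U is
   frame-generating, and it is the largest. *)

Section Ideals.
Variables (d : Order.disp_t) (T : porderType d).
Implicit Types (V W : (T -> Prop) -> Prop) (S A C : T -> Prop) (x y : T).

Definition principal y : T -> Prop := fun z => z <= y.

Lemma U_ideal_principal V y : U_ideal V (principal y).
Proof.
split=> [x z xz zy | S _ Sy x [_ lub_x]]; first exact: le_trans xz zy.
exact: lub_x.
Qed.

Definition ideal_lub V (F : (T -> Prop) -> Prop) : T -> Prop :=
  fun x => forall B, U_ideal V B -> (forall A, F A -> Defs.subset A B) -> B x.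

Lemma U_ideal_lub V (F : (T -> Prop) -> Prop) :
  is_lub_in (U_ideal V) F (ideal_lub V F).
Proof.
split; [split|split].
- move=> x y xy jy B HB FB; exact: (proj1 HB) x y xy (jy B HB FB).
- move=> S VS Sj x jx B HB FB; apply: (proj2 HB S VS _ x jx).
  by move=> s Ss; exact: Sj s Ss B HB FB.
- by move=> A FA x Ax B HB FB; exact: FB A FA x Ax.
- by move=> B HB FB x jx; exact: jx B HB FB.
Qed.

Lemma U_ideal_complete V : complete_lattice_in (U_ideal V).
Proof. by move=> F _; eexists; exact: U_ideal_lub. Qed.

Lemma U_ideal_glb_pair V A C : U_ideal V A -> U_ideal V C ->
  is_glb_in (U_ideal V) (pair_fam A C) (fun x => A x /\ C x).
Proof.
move=> [Ad Aj] [Cd Cj]; split; [split|split].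
- by move=> x y xy [Ay Cy]; split; [exact: Ad xy Ay | exact: Cd xy Cy].
- move=> S VS SAC x jx; split.
  + by apply: (Aj S VS _ x jx) => s /SAC [].
  + by apply: (Cj S VS _ x jx) => s /SAC [].
- by move=> B [->|->] x [].
- move=> B _ HB x Bx; split.
  + exact: HB A (or_introl erefl) x Bx.
  + exact: HB C (or_intror erefl) x Bx.
Qed.

Definition join_distributive V S : Prop :=
  forall x, is_join S x -> forall y, y <= x ->
  forall C, U_ideal V C -> (forall s w, S s -> w <= s -> w <= y -> C w) -> C y.

Lemma join_distributiveS V W S :
  (forall S', V S' -> W S') -> join_distributive V S -> join_distributive W S.
Proof.
move=> VW dS x jx y yx C [Cd Cj]; apply: (dS x jx y yx C); split=> // S' /VW.
exact: Cj.
Qed.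

Lemma frame_generating_join_distributive V S :
  frame_generating V -> V S -> join_distributive V S.
Proof.
move=> [_ frame_law] VS x jx y yx C HC HS.
pose F A := exists s, S s /\ A = principal s.
have FI A : F A -> U_ideal V A by move=> [s [_ ->]]; exact: U_ideal_principal.
have Hj := U_ideal_lub V F.
have Hm := U_ideal_glb_pair (U_ideal_principal V y) (proj1 Hj).
pose G c := exists A, F A /\ is_glb_in (U_ideal V) (pair_fam (principal y) A) c.
have jx' : ideal_lub V F x.
  apply: (proj2 (proj1 Hj) S VS _ x jx) => s Ss.
  by apply: (proj1 (proj2 Hj) (principal s) _ s (lexx s)); exists s.
have ky : ideal_lub V G y.
  rewrite -(frame_law _ F (U_ideal_principal V y) FI _ _ _ Hj Hm (U_ideal_lub V G)).
  exact: conj (lexx y) (proj1 (proj1 Hj) y x yx jx').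
apply: (ky C HC) => c [A [[s [Ss ->]] Hc]] z cz.
have zy : z <= y := proj1 (proj2 Hc) _ (or_introl erefl) z cz.
have zs : z <= s := proj1 (proj2 Hc) _ (or_intror erefl) z cz.
exact: HS Ss zs zy.
Qed.

Lemma join_distributive_frame_generating V :
  (forall S, V S -> join_distributive V S) -> frame_generating V.
Proof.
move=> dV; split; first exact: U_ideal_complete.
move=> a F Ha FI j m k Hj Hm Hk.
have ma : Defs.subset m a := proj1 (proj2 Hm) a (or_introl erefl).
have mj : Defs.subset m j := proj1 (proj2 Hm) j (or_intror erefl).
apply: functional_extensionality => x; apply: propositional_extensionality.
split=> [mx | kx].
- (* The u with a /\ principal u included in k form a V-ideal above j. *)
  pose H u := forall w, w <= u -> a w -> k w.
  have HH : U_ideal V H.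
    split=> [u v uv Hv w wu aw | S VS SH u ju w wu aw].
    + exact: Hv w (le_trans wu uv) aw.
    + apply: (dV S VS u ju w wu k (proj1 Hk)) => s w' Ss w's w'w.
      exact: SH s Ss w' w's (proj1 Ha w' w w'w aw).
  have jH : Defs.subset j H.
    apply: (proj2 (proj2 Hj) H HH) => s Fs z sz w wz aw.
    have sw : s w := proj1 (FI s Fs) w z wz sz.
    apply: (proj1 (proj2 Hk) _ _ w (conj aw sw)).
    by exists s; split; [exact: Fs | exact: U_ideal_glb_pair (FI s Fs)].
  exact: (jH x (mj x mx) x (lexx x) (ma x mx)).
- apply: (proj2 (proj2 Hk) m (proj1 Hm) _ x kx) => c [s [Fs Hc]].
  apply: (proj2 (proj2 Hm) c (proj1 Hc)) => A [->|->].
  + exact: (proj1 (proj2 Hc) a (or_introl erefl)).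
  + move=> z cz; apply: (proj1 (proj2 Hj) s Fs z).
    exact: (proj1 (proj2 Hc) s (or_intror erefl) z cz).
Qed.

Lemma frame_generatingP V :
  frame_generating V <-> forall S, V S -> join_distributive V S.
Proof.
split=> [fgV S | ]; last exact: join_distributive_frame_generating.
exact: frame_generating_join_distributive.
Qed.

Definition singleton_spec : (T -> Prop) -> Prop :=
  fun S => exists p, S = (fun q => q = p).

Lemma join_spec_singleton : join_spec singleton_spec.
Proof.
split=> [S [p ->] | p]; last by exists p.
by exists p; split=> [s -> | y]; last exact.
Qed.

Lemma frame_generating_singleton : frame_generating singleton_spec.
Proof.
apply/frame_generatingP => S [p ->] x [_ lub_x] y yx C _ HS.
have xp : x <= p by apply: lub_x => s ->.
exact: (HS p y erefl (le_trans yx xp) (lexx y)).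
Qed.

Definition bigcup_spec (W : ((T -> Prop) -> Prop) -> Prop) : (T -> Prop) -> Prop :=
  fun S => exists V, W V /\ V S.

Lemma join_spec_bigcup (W : ((T -> Prop) -> Prop) -> Prop) V0 :
  W V0 -> (forall V, W V -> join_spec V) -> join_spec (bigcup_spec W).
Proof.
move=> WV0 Wj; split=> [S [V [/Wj [Vj _] VS]] | p]; first exact: Vj.
by exists V0; split=> //; apply: (proj2 (Wj V0 WV0)).
Qed.

Lemma frame_generating_bigcup (W : ((T -> Prop) -> Prop) -> Prop) :
  (forall V, W V -> frame_generating V) -> frame_generating (bigcup_spec W).
Proof.
move=> Wfg; apply/frame_generatingP => S [V [WV VS]].
apply: join_distributiveS (frame_generating_join_distributive (Wfg V WV) VS).
by move=> S' VS'; exists V.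
Qed.

End Ideals.

Theorem proposition5p2 (d : Order.disp_t) (T : porderType d)
    (U : (T -> Prop) -> Prop) :
  join_spec U ->
  exists U' : (T -> Prop) -> Prop,
    [/\ join_spec U',
        (forall S, U' S -> U S),
        frame_generating U' &
        forall V : (T -> Prop) -> Prop,
          join_spec V -> (forall S, V S -> U S) -> frame_generating V ->
          forall S, V S -> U' S].
Proof.
move=> [_ U_singleton].
pose W V := [/\ join_spec V, (forall S, V S -> U S) & frame_generating V].
have W_singleton : W (@singleton_spec d T).
  split; [exact: join_spec_singleton | by move=> S [p ->] | ].
  exact: frame_generating_singleton.
exists (bigcup_spec W); split.
- by apply: join_spec_bigcup W_singleton _ => V [].
- by move=> S [V [[_ VU _] VS]]; exact: VU.
- by apply: frame_generating_bigcup => V [].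
- by move=> V Vj VU Vfg S VS; exists V.
Qed.
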